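(* Let $B_J=L+U\in\mathbb R^{n\times n}$ with $\rho(B_J)>0$, where $L$ is strictly lower triangular and $U$ is strictly upper triangular, and suppose $L\ne O$ and $U\ne O$. Then $UL\ne O$ and $LU\ne O$.
   Context: $\rho$ denotes spectral radius. *)

From HB Require Import structures.
From mathcomp Require Import all_boot all_order all_algebra.
From mathcomp Require Import complex.
From mathcomp Require Import classical_sets reals.
Set Implicit Arguments. Unset Strict Implicit. Unset Printing Implicit Defensive.
Import Order.TTheory GRing.Theory Num.Theory.
Local Open Scope ring_scope.
Local Open Scope classical_set_scope.

Definition complex_eigenvalues (R : realType) (n : nat) (A : 'M[R]_n)
  : set R[i] :=
  [set l : R[i] | eigenvalue (map_mx (fun x : R => (x%:C)%C) A) l].

(* Spectral radius rho(A) = max { |l| : l complex eigenvalue of A }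
   (the set is finite; sup of the empty set is 0, relevant only for n = 0). *)
Definition spectral_radius (R : realType) (n : nat) (A : 'M[R]_n) : R :=
  sup [set Normc.normc l | l in complex_eigenvalues A].

Definition strictly_lower (R : nzRingType) (n : nat) (L : 'M[R]_n) : Prop :=
  forall i j : 'I_n, (i <= j)%N -> L i j = 0.

Definition strictly_upper (R : nzRingType) (n : nat) (U : 'M[R]_n) : Prop :=
  forall i j : 'I_n, (j <= i)%N -> U i j = 0.

From HB Require Import structures.
From mathcomp Require Import all_boot all_order all_algebra.
From mathcomp Require Import complex.
From mathcomp Require Import classical_sets reals.
Import Order.TTheory GRing.Theory Num.Theory.
Local Open Scope ring_scope.
Set Implicit Arguments. Unset Strict Implicit.

(* If [U *m L = 0], every eigenvector [v] of [L + U] either satisfies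
   [v *m L = 0], making it an eigenvector of [U], or yields the eigenvector
   [v *m L] of [L] for the same eigenvalue, since [v *m (L + U) *m L = v *m L *m L].
   Strictly triangular matrices only have the eigenvalue 0, so neither does
   [L + U] (over the complex numbers), and its spectral radius vanishes.
   The case [L *m U = 0] is symmetric. *)

Lemma strictly_upper_trmx (R : nzRingType) n (U : 'M[R]_n) :
  strictly_upper U -> strictly_lower U^T.
Proof. by move=> uU i j le_ij; rewrite mxE uU. Qed.

Lemma strictly_lower_map (R S : nzRingType) (f : {rmorphism R -> S}) n
    (L : 'M[R]_n) :
  strictly_lower L -> strictly_lower (map_mx f L).
Proof. by move=> lL i j le_ij; rewrite mxE lL ?rmorph0. Qed.

Lemma strictly_upper_map (R S : nzRingType) (f : {rmorphism R -> S}) n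
    (U : 'M[R]_n) :
  strictly_upper U -> strictly_upper (map_mx f U).
Proof. by move=> uU i j le_ji; rewrite mxE uU ?rmorph0. Qed.

Lemma char_poly_trmx (R : comNzRingType) n (A : 'M[R]_n) :
  char_poly A^T = char_poly A.
Proof.
rewrite /char_poly -det_tr /char_poly_mx.
by congr (\det _); apply/matrixP => i j; rewrite !mxE eq_sym.
Qed.

Lemma char_poly_strictly_lower (R : comNzRingType) n (L : 'M[R]_n) :
  strictly_lower L -> char_poly L = 'X ^+ n.
Proof.
move=> lL; rewrite char_poly_trig; last first.
  by apply/is_trig_mxP => i j /ltnW; apply: lL.
under eq_bigr => i _ do rewrite lL // subr0.
by rewrite prodr_const card_ord.
Qed.

Lemma char_poly_strictly_upper (R : comNzRingType) n (U : 'M[R]_n) :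
  strictly_upper U -> char_poly U = 'X ^+ n.
Proof.
by move=> /strictly_upper_trmx/char_poly_strictly_lower; rewrite char_poly_trmx.
Qed.

Lemma eigenvalue_char_polyXn (F : fieldType) n (A : 'M[F]_n) a :
  char_poly A = 'X ^+ n -> eigenvalue A a -> a = 0.
Proof.
move=> chA; rewrite eigenvalue_root_char chA rootE hornerXn expf_eq0.
by case/andP=> _ /eqP.
Qed.

Lemma eigenvalue_addr_eq0 (F : fieldType) n (A B : 'M[F]_n) :
  (forall a, eigenvalue A a -> a = 0) -> (forall b, eigenvalue B b -> b = 0) ->
  B *m A = 0 -> forall c, eigenvalue (A + B) c -> c = 0.
Proof.
move=> eigA eigB BA c /eigenvalueP[v vAB v_nz].
have [vA0 | vA_nz] := eqVneq (v *m A) 0.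
  by apply: eigB; apply/eigenvalueP; exists v; rewrite // -vAB mulmxDr vA0 add0r.
apply: eigA; apply/eigenvalueP; exists (v *m A) => //.
by rewrite scalemxAl -vAB mulmxDr mulmxDl -!mulmxA BA mulmx0 addr0.
Qed.

Lemma spectral_radius_eq0 (R : realType) n (A : 'M[R]_n) :
  (forall l, complex_eigenvalues A l -> l = 0) -> spectral_radius A = 0.
Proof.
move=> eigA; rewrite /spectral_radius.
have : ([set Normc.normc l | l in complex_eigenvalues A] `<=` [set 0])%classic.
  by move=> _ [l /eigA -> <-]; apply: Normc.normc0.
by case/subset_set1 => ->; [apply: sup0 | apply: sup1].
Qed.

Theorem lemma6p1 (R : realType) (n : nat) (L U : 'M[R]_n) :
  strictly_lower L -> strictly_upper U ->
  0 < spectral_radius (L + U) ->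
  L != 0 -> U != 0 ->
  U *m L != 0 /\ L *m U != 0.
Proof.
move=> lL uU rho_gt0 _ _.
pose toC := real_complex R.
have eigL a : eigenvalue (map_mx toC L) a -> a = 0.
  exact/eigenvalue_char_polyXn/char_poly_strictly_lower/strictly_lower_map.
have eigU a : eigenvalue (map_mx toC U) a -> a = 0.
  exact/eigenvalue_char_polyXn/char_poly_strictly_upper/strictly_upper_map.
have nonzero_eigenvalue : ~ forall l, eigenvalue (map_mx toC (L + U)) l -> l = 0.
  by move=> /spectral_radius_eq0 rho0; rewrite rho0 ltxx in rho_gt0.
have toC_add : map_mx toC (L + U) = map_mx toC L + map_mx toC U.
  exact: map_mxD.
have toC_mul (A B : 'M[R]_n) : map_mx toC (A *m B) = map_mx toC A *m map_mx toC B.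
  exact: map_mxM.
split; apply/eqP => prod0; apply: nonzero_eigenvalue => l; rewrite toC_add.
  by apply: (eigenvalue_addr_eq0 eigL eigU); rewrite -toC_mul prod0 map_mx0.
rewrite addrC.
by apply: (eigenvalue_addr_eq0 eigU eigL); rewrite -toC_mul prod0 map_mx0.
Qed.
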